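(* If $H$ is a minimal $Q$-triconnected graph, then the contracted version of $H$ is also a minimal $Q$-triconnected graph.
   Context: Two vertices are triconnected if there are three internally vertex-disjoint paths between them. $H$ is $Q$-triconnected if every pair of vertices of $Q$ is triconnected in $H$; it is minimal if deleting any edge or vertex violates this. The contracted version of $H$ is obtained by contracting edges incident to vertices of degree two until no vertex of degree two remains, so that every maximal path of $H$ whose internal vertices have degree two becomes a single edge (the resulting graph may have parallel edges). *)

(* Finite multigraphs over ambient finite types of vertices
   and edges; each edge has two (unordered) endpoints src/tgt. *)
From mathcomp Require Import all_boot.
Set Implicit Arguments. Unset Strict Implicit. Unset Printing Implicit Defensive.

Record mgraph (V E : finType) := MGraph {
  vset : {set V};
  eset : {set E};
  src  : E -> V;
  tgt  : E -> V }.

Section Graphs.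
Variables V E : finType.
Implicit Types (H : mgraph V E) (u v w x : V) (e f : E).

Definition wf H := forall e, e \in eset H -> src H e \in vset H /\ tgt H e \in vset H.

Definition simple H :=
  (forall e, e \in eset H -> src H e != tgt H e) /\
  (forall e f, e \in eset H -> f \in eset H -> e != f ->
     ~ ((src H e = src H f /\ tgt H e = tgt H f) \/
        (src H e = tgt H f /\ tgt H e = src H f))).

(* degree, loops counted twice *)
Definition deg H v : nat :=
  #|[set e in eset H | src H e == v]| + #|[set e in eset H | tgt H e == v]|.

Definition joins H e y x : bool :=
  (e \in eset H) && (((src H e == y) && (tgt H e == x)) || ((tgt H e == y) && (src H e == x))).

Fixpoint walk H (y : V) (p : seq (E * V)) : bool :=
  if p is (e, x) :: p' then joins H e y x && walk H x p' else true.

Definition is_path H u v (p : seq (E * V)) : bool :=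
  [&& walk H u p, uniq (u :: map snd p), all (fun x => x \in vset H) (u :: map snd p)
    & last u (map snd p) == v].

Definition inner u v (p : seq (E * V)) : seq V :=
  [seq x <- u :: map snd p | (x != u) && (x != v)].

Definition int_disjoint u v (p q : seq (E * V)) : Prop :=
  forall x, x \in inner u v p -> x \notin inner u v q.

Definition triconnected H u v : Prop :=
  exists p1 p2 p3,
    [/\ is_path H u v p1, is_path H u v p2 & is_path H u v p3] /\
    [/\ p1 != p2, p1 != p3 & p2 != p3] /\
    [/\ int_disjoint u v p1 p2, int_disjoint u v p1 p3 & int_disjoint u v p2 p3].

Definition Qtriconnected H (Q : {set V}) : Prop :=
  Q \subset vset H /\
  forall u v, u \in Q -> v \in Q -> u != v -> triconnected H u v.

Definition del_edge H e : mgraph V E :=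
  MGraph (vset H) (eset H :\ e) (src H) (tgt H).

Definition del_vertex H x : mgraph V E :=
  MGraph (vset H :\ x) [set g in eset H | (src H g != x) && (tgt H g != x)]
         (src H) (tgt H).

Definition minimal_Qtriconnected H (Q : {set V}) : Prop :=
  [/\ Qtriconnected H Q,
      forall e, e \in eset H -> ~ Qtriconnected (del_edge H e) Q
    & forall x, x \in vset H -> ~ Qtriconnected (del_vertex H x) Q].

(* one contraction step: w has degree 2, with incident edges e (joining w to
   x <> w) and f <> e; contract e, i.e. delete w and e and reattach the
   w-end of f to x *)
Definition contract_step H H' : Prop :=
  exists w x e f,
    [/\ w \in vset H, deg H w = 2, x != w & joins H e w x] /\
    [/\ f \in eset H, f != e & (src H f == w) || (tgt H f == w)] /\
    H' = MGraph (vset H :\ w) (eset H :\ e)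
           (fun g => if (g == f) && (src H g == w) then x else src H g)
           (fun g => if (g == f) && (tgt H g == w) then x else tgt H g).

Inductive contracts : mgraph V E -> mgraph V E -> Prop :=
  | contracts_refl H : contracts H H
  | contracts_step H H1 H2 : contract_step H H1 -> contracts H1 H2 -> contracts H H2.

Definition contracted_version H H' : Prop :=
  contracts H H' /\ forall v, v \in vset H' -> deg H' v != 2.

End Graphs.

From mathcomp Require Import all_boot.
Set Implicit Arguments. Unset Strict Implicit. Unset Printing Implicit Defensive.

(* Let w be a vertex of degree two with edges e = wx and f = wy, contracted by
   deleting w and e and letting f join x and y.  Minimality of H forces w \notin Q
   (three internally disjoint paths cannot leave w through only two edges) and
   x <> y (otherwise no path between vertices of Q passes through w, and w could
   be deleted).  A u-v path of H is mapped to the contraction H' by skipping w;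
   this keeps paths distinct and internally disjoint, so H' is Q-triconnected.
   Conversely, deleting x, y or f from H' leaves a subgraph of H minus the same
   element, while after deleting any other edge or vertex of H', subdividing f
   again by w gives a subgraph of H minus that element, along which the three
   paths lift. *)


Lemma last_filter (T : eqType) (a : pred T) u s :
  a (last u s) -> last u (filter a s) = last u s.
Proof.
elim: s u => //= z s IH u as_; case: ifP => az /=; first exact: IH.
by case: s IH as_ => [|z' s] IH as_ /=; [rewrite as_ in az | rewrite IH].
Qed.

Section Paths.
Variables V E : finType.
Implicit Types (G : mgraph V E) (a b c u v w x z : V) (g : E) (p q : seq (E * V)).

Lemma joinsC G g b c : joins G g b c = joins G g c b.
Proof. by rewrite /joins orbC; congr (_ && (_ || _)); apply: andbC. Qed.

Lemma joins_endpoints G g b c :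
  joins G g b c -> (src G g = b /\ tgt G g = c) \/ (src G g = c /\ tgt G g = b).
Proof. by case/andP=> _ /orP[/andP[/eqP -> /eqP ->]|/andP[/eqP -> /eqP ->]]; auto. Qed.

Lemma joins_of_endpoints G g b c : g \in eset G ->
  (src G g = b /\ tgt G g = c) \/ (src G g = c /\ tgt G g = b) -> joins G g b c.
Proof. by rewrite /joins => -> [[-> ->]|[-> ->]]; rewrite !eqxx ?orbT. Qed.

Lemma joins_same_ends G g w x b c :
  joins G g w x -> joins G g b c -> (b = w /\ c = x) \/ (b = x /\ c = w).
Proof.
by move=> /joins_endpoints[[<- <-]|[<- <-]] /joins_endpoints[[-> ->]|[-> ->]]; auto.
Qed.

Lemma joins_del_edge G g g' b c :
  joins (del_edge G g) g' b c = (g' != g) && joins G g' b c.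
Proof. by rewrite /joins /= !inE andbA. Qed.

Lemma joins_del_vertex G z g b c :
  joins (del_vertex G z) g b c = [&& joins G g b c, src G g != z & tgt G g != z].
Proof.
rewrite /joins /= !inE.
by case: (g \in eset G); case: (src G g != z); case: (tgt G g != z); rewrite /= ?andbT ?andbF.
Qed.

Lemma wf_joins G g b c : wf G -> joins G g b c -> b \in vset G /\ c \in vset G.
Proof.
move=> W J; have [s t] := W g (proj1 (andP J)).
by case: (joins_endpoints J) => [[<- <-]|[<- <-]].
Qed.

Lemma mem_walk_joins G a p g c :
  walk G a p -> (g, c) \in p -> exists2 b, b \in a :: map snd p & joins G g b c.
Proof.
elim: p a => [|[g' z] p IH] a //= /andP[J W]; rewrite inE => /orP[/eqP[-> ->]|M].
  by exists a; rewrite ?mem_head.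
by have [b Hb Jb] := IH _ W M; exists b; rewrite // inE Hb orbT.
Qed.

Lemma walk_uniq_edges G a p :
  walk G a p -> uniq (a :: map snd p) -> uniq (map fst p).
Proof.
elim: p a => [|[g z] p IH] a //= /andP[J W] /andP[U1 U]; rewrite (IH z W U) andbT.
apply/mapP => -[[g' c] Hc /= gg']; subst g'.
have [b Hb Jb] := mem_walk_joins W Hc.
have Hc' : c \in z :: map snd p by rewrite inE (map_f snd Hc) orbT.
by case: (joins_same_ends J Jb) => [[ba _]|[_ ca]]; rewrite -?ba -?ca ?Hb ?Hc' in U1.
Qed.

Lemma walk_cat G a p q :
  walk G a (p ++ q) = walk G a p && walk G (last a (map snd p)) q.
Proof. by elim: p a => [|[g z] p IH] a //=; rewrite IH andbA. Qed.

Lemma walk_mono G G' a p :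
  (forall g b c, b \in a :: map snd p -> c \in a :: map snd p ->
     joins G g b c -> joins G' g b c) -> walk G a p -> walk G' a p.
Proof.
elim: p a => [|[g z] p IH] a //= Hj /andP[J W].
rewrite (Hj g a z) ?inE ?eqxx ?orbT //=.
by apply: IH W => g' b c Hb Hc; apply: Hj; rewrite inE ?Hb ?Hc orbT.
Qed.

Lemma is_path_mono G G' u v p :
  (forall g b c, b \in u :: map snd p -> c \in u :: map snd p ->
     joins G g b c -> joins G' g b c) ->
  {subset u :: map snd p <= vset G'} -> is_path G u v p -> is_path G' u v p.
Proof.
move=> Hj Hv /and4P[W U _ L]; apply/and4P; split => //; first exact: walk_mono W.
exact/allP.
Qed.

Lemma triconnected_transfer G G' u v (m : seq (E * V) -> seq (E * V)) :
  (forall p, is_path G u v p -> is_path G' u v (m p)) ->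
  (forall p q, is_path G u v p -> is_path G u v q -> p != q -> int_disjoint u v p q ->
     m p != m q /\ int_disjoint u v (m p) (m q)) ->
  triconnected G u v -> triconnected G' u v.
Proof.
move=> Hp Hd [p1 [p2 [p3 [[P1 P2 P3] [[N12 N13 N23] [D12 D13 D23]]]]]].
have [M12 E12] := Hd _ _ P1 P2 N12 D12.
have [M13 E13] := Hd _ _ P1 P3 N13 D13.
have [M23 E23] := Hd _ _ P2 P3 N23 D23.
by exists (m p1), (m p2), (m p3); split; first by split; apply: Hp.
Qed.

Lemma Qtriconnected_mono G G' (Q : {set V}) :
  (forall g b c, joins G g b c -> joins G' g b c) ->
  vset G \subset vset G' -> Qtriconnected G Q -> Qtriconnected G' Q.
Proof.
move=> Hj Hs [HQ Ht]; split; first exact: subset_trans Hs.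
move=> u v Hu Hv Huv; apply: (triconnected_transfer (m := id) _ _ (Ht u v Hu Hv Huv)) => //.
move=> p P; apply: (is_path_mono _ _ P) => [g b c _ _|z Hz]; first exact: Hj.
by move: P => /and4P[_ _ /allP A _]; exact: (subsetP Hs _ (A _ Hz)).
Qed.

Lemma Qtriconnected_trivial G (Q : {set V}) :
  Q \subset vset G -> (forall u v, u \in Q -> v \in Q -> u = v) -> Qtriconnected G Q.
Proof. by move=> HQ Q1; split=> // u v Hu Hv; rewrite (Q1 u v Hu Hv) eqxx. Qed.

Lemma mem_inner u v p z :
  z \in u :: map snd p -> z != u -> z != v -> z \in inner u v p.
Proof. by move=> Hz zu zv; rewrite /inner mem_filter zu zv. Qed.

Lemma is_path_step_last G a v g p : is_path G a v ((g, v) :: p) -> p = [::].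
Proof.
case: p => [|[g2 z2] p] // /and4P[_ /= /andP[_ /andP[U _]] _ /eqP L].
by move: U; rewrite -{1}L mem_last.
Qed.

Lemma int_disjoint_same_step G u v g z p q :
  is_path G u v ((g, z) :: p) -> is_path G u v ((g, z) :: q) ->
  int_disjoint u v ((g, z) :: p) ((g, z) :: q) -> z != u -> p = q.
Proof.
move=> Pp Pq D zu; case: (eqVneq z v) => zv.
  by subst z; rewrite (is_path_step_last Pp) (is_path_step_last Pq).
have Hz r : z \in inner u v ((g, z) :: r) by apply: mem_inner; rewrite ?inE ?eqxx ?orbT.
by have := D z (Hz p); rewrite Hz.
Qed.

Lemma walk_single_edge G u v g p :
  walk G u p -> uniq (u :: map snd p) -> last u (map snd p) = v -> g \in map fst p ->
  (forall b c, joins G g b c -> (b = u /\ c = v) \/ (b = v /\ c = u)) -> p = [:: (g, v)].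
Proof.
case: p => [|[g' z] p] //= /andP[J W] /andP[U1 U] L; rewrite inE => Hg Hends.
case: (eqVneq g' g) => gg'.
  subst g'; have [[_ zv]|[_ zu]] := Hends _ _ J; last by rewrite zu mem_head in U1.
  subst z; case: p W U1 U L {Hg} => [|[g2 z2] p] //= W U1 /andP[U2 _] L.
  by move: U2; rewrite -{1}L mem_last.
move: Hg; rewrite eq_sym (negbTE gg') /= => /mapP[[g2 c] Hgc /= e2]; subst g2.
have [b Hb Jb] := mem_walk_joins W Hgc.
have [[bu _]|[_ cu]] := Hends _ _ Jb; subst; first by rewrite Hb in U1.
by rewrite inE (map_f snd Hgc) orbT in U1.
Qed.

End Paths.

Definition subdivision_vertex (V E : finType) (H : mgraph V E) w x y e f : Prop :=
  [/\ w \in vset H, x \in vset H, y \in vset H, x != w & y != w] /\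
  [/\ joins H e w x, joins H f w y, e != f &
      forall g, g \in eset H -> g != e -> g != f -> (src H g != w) && (tgt H g != w)].

Definition contraction (V E : finType) (H : mgraph V E) w x e f : mgraph V E :=
  MGraph (vset H :\ w) (eset H :\ e)
    (fun g => if (g == f) && (src H g == w) then x else src H g)
    (fun g => if (g == f) && (tgt H g == w) then x else tgt H g).

(* A path through w uses e and f consecutively; in the contraction the single
   edge f joins the two neighbours of w. *)
Definition contract_path (V E : finType) (w : V) (e f : E) (p : seq (E * V)) :=
  [seq ((if s.1 == e then f else s.1), s.2) | s <- p & s.2 != w].

Lemma contract_path_cons (V E : finType) (w : V) (e f : E) g z p :
  contract_path w e f ((g, z) :: p) =
  if z == w then contract_path w e f p
  else ((if g == e then f else g), z) :: contract_path w e f p.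
Proof. by rewrite /contract_path /=; case: (z == w). Qed.

Lemma contract_path_snd (V E : finType) (w : V) (e f : E) p :
  map snd (contract_path w e f p) = filter (predC1 w) (map snd p).
Proof. by rewrite /contract_path -map_comp filter_map. Qed.

Lemma inner_contract_path (V E : finType) (w : V) (e f : E) u v p :
  {subset inner u v (contract_path w e f p) <= inner u v p}.
Proof.
move=> z; rewrite /inner contract_path_snd !mem_filter => /andP[-> /=].
by rewrite !inE mem_filter => /orP[->|/andP[_ ->]]; rewrite ?orbT.
Qed.

Section ContractionJoins.
Variables (V E : finType) (H : mgraph V E) (w x : V) (e f : E).
Implicit Types (b c : V) (g : E).

Lemma contraction_joins g b c :
  g != e -> g != f -> joins (contraction H w x e f) g b c = joins H g b c.
Proof. by move=> ge gf; rewrite /joins /= !inE ge (negbTE gf). Qed.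

Lemma contraction_joins_e b c : joins (contraction H w x e f) e b c = false.
Proof. by rewrite /joins /= !inE eqxx. Qed.

Lemma contraction_endpoints g :
  g != f -> src (contraction H w x e f) g = src H g /\ tgt (contraction H w x e f) g = tgt H g.
Proof. by move=> gf /=; rewrite (negbTE gf). Qed.

End ContractionJoins.

Section SubdivisionVertex.
Variables (V E : finType) (H : mgraph V E) (w x y : V) (e f : E).
Hypothesis Hw : subdivision_vertex H w x y e f.
Implicit Types (a b c u v z : V) (g : E) (p q : seq (E * V)).

Let H' := contraction H w x e f.

Lemma joins_at_w g z : joins H g w z -> (g = e /\ z = x) \/ (g = f /\ z = y).
Proof.
have [[_ _ _ xw yw] [Je Jf _ Hother]] := Hw.
move=> J; case: (eqVneq g e) => [ge|ge]; first subst g.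
  by case: (joins_same_ends Je J) => [[_ ->]|[wx _]]; [left | rewrite wx eqxx in xw].
case: (eqVneq g f) => [gf|gf]; first subst g.
  by case: (joins_same_ends Jf J) => [[_ ->]|[wy _]]; [right | rewrite wy eqxx in yw].
have /andP[s t] := Hother g (proj1 (andP J)) ge gf.
by case: (joins_endpoints J) => [[sw _]|[_ tw]]; [rewrite sw eqxx in s | rewrite tw eqxx in t].
Qed.

Lemma joins_off_w g b c : joins H g b c -> b != w -> c != w -> g != e /\ g != f.
Proof.
have [_ [Je Jf _ _]] := Hw => J bw cw.
by split; apply/eqP=> gef; subst g;
  [case: (joins_same_ends Je J) | case: (joins_same_ends Jf J)] => -[bw' cw'];
  rewrite ?bw' ?cw' eqxx in bw cw.
Qed.

Lemma pass_through_w a g g' z : joins H g a w -> joins H g' w z -> a != z ->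
  [/\ g = e, g' = f, a = x & z = y] \/ [/\ g = f, g' = e, a = y & z = x].
Proof.
rewrite joinsC => /joins_at_w[[-> ->]|[-> ->]] /joins_at_w[[-> ->]|[-> ->]];
  rewrite ?eqxx //; by [left | right].
Qed.

Lemma contraction_joins_f b c :
  joins H' f b c = ((b == x) && (c == y)) || ((b == y) && (c == x)).
Proof.
have [[_ _ _ _ yw] [_ Jf ef _]] := Hw.
rewrite /joins /= !inE eq_sym ef eqxx /=; case/andP: Jf => -> /=.
case/orP=> /andP[/eqP -> /eqP ->]; rewrite eqxx (negbTE yw) /= ![_ == b]eq_sym ![_ == c]eq_sym //.
by rewrite orbC.
Qed.

Lemma walk_contract_path a p :
  walk H a p -> uniq (a :: map snd p) -> a != w -> last a (map snd p) != w ->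
  walk H' a (contract_path w e f p).
Proof.
have [n] := ubnP (size p); elim: n p a => // n IH [|[g z] p] a //= /ltnSE sz
  /andP[J W] /andP[U1 U] aw L.
rewrite contract_path_cons; case: (eqVneq z w) => zw; last first.
  have [ge gf] := joins_off_w J aw zw.
  by rewrite /= (negbTE ge) contraction_joins // J IH.
subst z; case: p sz W U1 U L => [|[g2 z2] p] sz; first by rewrite eqxx.
move=> /= /andP[J2 W] U1 /andP[U2 U] L.
have z2w : z2 != w by apply: contraNneq U2 => ->; rewrite mem_head.
have az2 : a != z2 by apply: contraNneq U1 => ->; rewrite !inE eqxx orbT.
rewrite contract_path_cons (negbTE z2w) /= IH //; last exact: ltnW.
have [[_ -> -> ->]|[_ -> -> ->]] := pass_through_w J J2 az2;
  by rewrite ?eqxx ?if_same contraction_joins_f !eqxx ?orbT.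
Qed.



Lemma walk_off_w a p : walk H a p -> a != w -> w \notin map snd p ->
  {in p, forall s, s.1 != e /\ s.1 != f}.
Proof.
move=> W aw wp [g c] Hgc /=; have [b Hb Jb] := mem_walk_joins W Hgc.
apply: (joins_off_w Jb); last by apply: contraNneq wp => <-; exact: map_f Hgc.
by move: Hb; rewrite inE => /orP[/eqP ->|Hb] //; apply: contraNneq wp => <-.
Qed.

Lemma contract_path_off_w a p : walk H a p -> a != w -> w \notin map snd p ->
  contract_path w e f p = p /\ f \notin map fst p.
Proof.
move=> W aw wp; have off := walk_off_w W aw wp; split.
  rewrite /contract_path (all_filterP _); last first.
    by apply/allP => -[g c] Hgc /=; apply: contraNneq wp => <-; exact: map_f Hgc.
  by apply: map_id_in => -[g c] /off [/= /negbTE -> _].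
by apply/mapP => -[s /off [_ /negP fs] sf]; apply: fs; rewrite sf.
Qed.

Lemma is_path_contract_path u v p : u != w -> v != w ->
  is_path H u v p -> is_path H' u v (contract_path w e f p).
Proof.
move=> uw vw /and4P[W U A /eqP L].
rewrite /is_path contract_path_snd /=; apply/and4P; split.
- by apply: walk_contract_path; rewrite ?L.
- by move: U => /= /andP[U1 U]; rewrite filter_uniq // mem_filter negb_and U1 orbT.
- move: A => /= /andP[Au /allP A]; rewrite !inE uw Au /=.
  by apply/allP => z; rewrite mem_filter /= => /andP[zw Hz]; rewrite !inE zw A.
- by rewrite last_filter /= L.
Qed.

Lemma contract_path_through_w a p :
  walk H a p -> uniq (a :: map snd p) -> a != w -> last a (map snd p) != w ->
  w \in map snd p -> x != y /\ f \in map fst (contract_path w e f p).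
Proof.
elim: p a => [|[g z] p IH] a //= /andP[J W] /andP[U1 U] aw L; rewrite inE contract_path_cons.
case: (eqVneq z w) => [zw _|zw /= wp]; last first.
  by have [-> fp] := IH z W U zw L wp; rewrite inE fp orbT.
subst z; case: p W U1 U L {IH} => [|[g2 z2] p] W U1 U L; first by rewrite eqxx in L.
move: W U => /= /andP[J2 _] /andP[U2 _].
have z2w : z2 != w by apply: contraNneq U2 => ->; rewrite mem_head.
have az2 : a != z2 by apply: contraNneq U1 => ->; rewrite !inE eqxx orbT.
rewrite contract_path_cons (negbTE z2w) /= inE.
have [[_ -> ax zy]|[_ -> ay zx]] := pass_through_w J J2 az2;
  rewrite ?if_same !eqxx; split=> //.
- by rewrite -ax -zy.
- by rewrite eq_sym -ay -zx.
Qed.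

Lemma contract_path_neq u v p q : u != w -> v != w ->
  is_path H u v p -> is_path H u v q -> p != q -> int_disjoint u v p q ->
  contract_path w e f p != contract_path w e f q.
Proof.
move=> uw vw Pp Pq npq D.
have through r : is_path H u v r -> w \in map snd r -> f \in map fst (contract_path w e f r).
  move=> /and4P[W U _ /eqP L] wr; have Lw : last u (map snd r) != w by rewrite L.
  by have [] := contract_path_through_w W U uw Lw wr.
have off r : is_path H u v r -> w \notin map snd r ->
    contract_path w e f r = r /\ f \notin map fst r.
  by move=> /and4P[W _ _ _]; apply: contract_path_off_w W uw.
have inner_w (r : seq (E * V)) : w \in map snd r -> w \in inner u v r.
  by move=> wr; apply: mem_inner; rewrite 1?eq_sym ?inE ?wr ?orbT.
case: (boolP (w \in map snd p)) => wp; case: (boolP (w \in map snd q)) => wq.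
- by have := D w (inner_w p wp); rewrite inner_w.
- have [-> fq] := off q Pq wq.
  by apply: contraNneq fq => <-; exact: through.
- have [-> fp] := off p Pp wp.
  by apply: contraNneq fp => ->; exact: through.
- by have [-> _] := off p Pp wp; have [-> _] := off q Pq wq.
Qed.

Lemma Qtriconnected_contraction (Q : {set V}) :
  w \notin Q -> Qtriconnected H Q -> Qtriconnected H' Q.
Proof.
move=> wQ [HQ Ht]; have notw z : z \in Q -> z != w by apply: contraTneq => ->.
split.
  by apply/subsetP => z Hz; rewrite /H' /= in_setD1 notw ?(subsetP HQ _ Hz).
move=> u v Hu Hv uv; have uw := notw u Hu; have vw := notw v Hv.
apply: (triconnected_transfer (m := contract_path w e f) _ _ (Ht u v Hu Hv uv)).
  by move=> p; apply: is_path_contract_path.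
move=> p q Pp Pq npq D; split; first exact: contract_path_neq uw vw Pp Pq npq D.
by move=> z /inner_contract_path Hz; apply: contraNN (D z Hz) => /inner_contract_path.
Qed.

Lemma is_path_from_w v p : v != w -> is_path H w v p ->
  exists2 s, s \in [:: (e, x); (f, y)] & exists p', p = s :: p'.
Proof.
case: p => [|[g z] p] vw /and4P[/= W _ _ /eqP L]; first by rewrite -L eqxx in vw.
exists (g, z); last by exists p.
by case/andP: W => /joins_at_w[[-> ->]|[-> ->]]; rewrite !inE eqxx ?orbT.
Qed.

Lemma not_triconnected_at_w v : v != w -> ~ triconnected H w v.
Proof.
have [[_ _ _ xw yw] _] := Hw.
move=> vw [p1 [p2 [p3 [[P1 P2 P3] [[N12 N13 N23] [D12 D13 D23]]]]]].
have [s1 S1 [q1 E1]] := is_path_from_w vw P1.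
have [s2 S2 [q2 E2]] := is_path_from_w vw P2.
have [s3 S3 [q3 E3]] := is_path_from_w vw P3.
subst p1 p2 p3.
have same s p q : s \in [:: (e, x); (f, y)] -> is_path H w v (s :: p) ->
    is_path H w v (s :: q) -> int_disjoint w v (s :: p) (s :: q) -> s :: p = s :: q.
  case: s => g z Hs Pp Pq D; congr cons; apply: int_disjoint_same_step Pp Pq D _.
  by move: Hs; rewrite !inE => /orP[]/eqP[_ ->].
have : [|| s1 == s2, s1 == s3 | s2 == s3].
  by move: S1 S2 S3; rewrite !inE => /orP[]/eqP-> /orP[]/eqP-> /orP[]/eqP->; rewrite ?eqxx ?orbT.
case/or3P=> /eqP Es; subst.
- by move: N12; rewrite (same _ _ _ S1 P1 P2 D12) eqxx.
- by move: N13; rewrite (same _ _ _ S1 P1 P3 D13) eqxx.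
- by move: N23; rewrite (same _ _ _ S2 P2 P3 D23) eqxx.
Qed.

Lemma Qtriconnected_del_w (Q : {set V}) : x = y -> w \notin Q ->
  Qtriconnected H Q -> Qtriconnected (del_vertex H w) Q.
Proof.
move=> xy wQ [HQ Ht]; have notw z : z \in Q -> z != w by apply: contraTneq => ->.
split; first by apply/subsetP => z Hz; rewrite /= in_setD1 notw // (subsetP HQ).
move=> u v Hu Hv uv; have uw := notw u Hu.
apply: (triconnected_transfer (m := id) _ _ (Ht u v Hu Hv uv)) => // p P.
have wp : w \notin u :: map snd p.
  move: (P) => /and4P[W U _ /eqP L]; rewrite inE negb_or eq_sym uw /=.
  apply/negP => /(contract_path_through_w W U uw); rewrite L notw // => /(_ isT)[].
  by rewrite xy eqxx.
apply: (is_path_mono _ _ P) => [g b c Hb Hc J|z Hz].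
  rewrite joins_del_vertex J /=.
  by case: (joins_endpoints J) => [[-> ->]|[-> ->]];
    apply/andP; split; apply: contraNneq wp => <-.
move: P => /and4P[_ _ /allP A _]; rewrite /= in_setD1 A // andbT.
by apply: contraNneq wp => <-.
Qed.

End SubdivisionVertex.

(* G contains G1 with its x-y edge f subdivided by the new vertex w. *)
Definition subdivision_in (V E : finType) (G1 G : mgraph V E) w x y e f : Prop :=
  [/\ w \in vset G, w \notin vset G1, vset G1 \subset vset G & x != y] /\
  [/\ joins G e w x, joins G f w y, e != f,
      forall g b c, g != f -> joins G1 g b c -> joins G g b c &
      forall b c, joins G1 f b c -> (b = x /\ c = y) \/ (b = y /\ c = x)].

(* A step along f that does not end at y goes from y to x. *)
Definition subdivide_step (V E : finType) (w y : V) (e f : E) (s : E * V) :=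
  if s.1 == f then (if s.2 == y then [:: (e, w); (f, y)] else [:: (f, w); (e, s.2)])
  else [:: s].

Definition subdivide_path (V E : finType) (w y : V) (e f : E) (p : seq (E * V)) :=
  flatten [seq subdivide_step w y e f s | s <- p].

Section SubdividePath.
Variables (V E : finType) (w y : V) (e f : E).
Implicit Types (a : V) (s : E * V) (p q : seq (E * V)).

Local Notation sstep := (subdivide_step w y e f).
Local Notation spath := (subdivide_path w y e f).

Lemma subdivide_step_snd s :
  map snd (sstep s) = if s.1 == f then [:: w; s.2] else [:: s.2].
Proof. by case: s => g z; rewrite /subdivide_step /=; case: ifP => // _; case: eqP => // ->. Qed.

Lemma subdivide_path_cons s p : spath (s :: p) = sstep s ++ spath p.
Proof. by []. Qed.

Lemma subdivide_path_snd p : {subset map snd (spath p) <= w :: map snd p}.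
Proof.
have step_sub s : {subset map snd (sstep s) <= [:: w; s.2]}.
  by rewrite subdivide_step_snd; case: ifP => _ z; rewrite !inE // => ->; rewrite orbT.
elim: p => [|s p IH] z //; rewrite subdivide_path_cons map_cat mem_cat.
by case/orP=> [/step_sub|/IH]; rewrite !inE => /orP[]->; rewrite ?orbT.
Qed.

Lemma last_subdivide_path a p : last a (map snd (spath p)) = last a (map snd p).
Proof.
elim: p a => [|s p IH] a //=; rewrite subdivide_path_cons map_cat last_cat IH.
by rewrite subdivide_step_snd; case: ifP.
Qed.

Lemma subdivide_path_w p :
  w \in map snd (spath p) -> w \notin map snd p -> f \in map fst p.
Proof.
elim: p => [|[g z] p IH] //; rewrite subdivide_path_cons map_cat mem_cat subdivide_step_snd.
rewrite /= !inE negb_or => /orP[Hw|Hw] /andP[wz wp]; last by rewrite IH ?orbT.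
by move: Hw; case: ifP => [/eqP ->|_]; rewrite ?eqxx // inE (negbTE wz).
Qed.

Lemma subdivide_path_inj p q : e != f -> w \notin map snd p -> w \notin map snd q ->
  spath p = spath q -> p = q.
Proof.
move/eqP => ef; elim: p q => [|[g z] p IH] [|[g' z'] q] //=; rewrite ?inE ?negb_or.
- by move=> _ _; rewrite /subdivide_path /subdivide_step /=; case: ifP => //; case: ifP.
- by move=> _ _; rewrite /subdivide_path /subdivide_step /=; case: ifP => //; case: ifP.
move=> /andP[/eqP wz Hp] /andP[/eqP wz' Hq] Heq.
suff [E1 E2] : (g, z) = (g', z') /\ spath p = spath q by rewrite E1 (IH q).
move: Heq; rewrite !subdivide_path_cons /subdivide_step /=.
case: (g =P f) => gf; case: (g' =P f) => gf';
  try case: (z =P y) => zy; try case: (z' =P y) => zy'; move=> /= Heq; split; congruence.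
Qed.

Lemma inner_subdivide_path u v p z :
  z \in inner u v (spath p) -> z \in inner u v p \/ z = w.
Proof.
rewrite /inner !mem_filter /= => /andP[/andP[zu zv]].
rewrite inE (negbTE zu) /= => /subdivide_path_snd; rewrite inE => /orP[/eqP ->|Hz].
  by right.
by left; rewrite zv /= inE Hz orbT.
Qed.

Lemma inner_subdivide_path_w u v p :
  w \in inner u v (spath p) -> w \notin map snd p -> f \in map fst p.
Proof.
rewrite /inner mem_filter inE => /andP[/andP[wu _] /orP[/eqP wu'|]].
  by rewrite wu' eqxx in wu.
exact: subdivide_path_w.
Qed.

End SubdividePath.

Section Subdivision.
Variables (V E : finType) (G1 G : mgraph V E) (w x y : V) (e f : E).
Hypothesis Hs : subdivision_in G1 G w x y e f.
Implicit Types (a u v z : V) (p q : seq (E * V)).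

Local Notation spath := (subdivide_path w y e f).

Lemma walk_subdivide_path a p : walk G1 a p -> walk G a (spath p).
Proof.
have [[_ _ _ xy] [Je Jf _ Hg Hf]] := Hs.
elim: p a => [|[g z] p IH] a //= /andP[J W].
rewrite subdivide_path_cons walk_cat.
have -> : last a (map snd (subdivide_step w y e f (g, z))) = z.
  by rewrite subdivide_step_snd; case: ifP.
rewrite IH // andbT /subdivide_step /=.
case: (eqVneq g f) => [gf|gf]; last by rewrite /= Hg.
subst g; have [[-> ->]|[-> ->]] := Hf _ _ J; rewrite ?eqxx ?(negbTE xy) /=.
- by rewrite joinsC Je Jf.
- by rewrite joinsC Jf Je.
Qed.

Lemma uniq_subdivide_path a p : walk G1 a p -> uniq (a :: map snd p) ->
  {subset a :: map snd p <= vset G1} -> uniq (a :: map snd (spath p)).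
Proof.
have [[_ wG1 _ _] _] := Hs.
have notw z : z \in vset G1 -> z != w by apply: contraTneq => ->.
elim: p a => [|[g z] p IH] a //= W0 U0 A; have /andP[J W] := W0.
move: (U0) => /andP[U1 U].
have Az : {subset z :: map snd p <= vset G1} by move=> t Ht; apply: A; rewrite inE Ht orbT.
have Up := IH z W U Az.
have anot : a \notin map snd (spath p).
  apply/negP => /subdivide_path_snd; rewrite inE => /orP[/eqP aw|Ha].
    by have := notw a (A a (mem_head _ _)); rewrite aw eqxx.
  by rewrite inE Ha orbT in U1.
rewrite subdivide_path_cons map_cat subdivide_step_snd /=.
have az : a != z by move: U1; rewrite inE negb_or => /andP[].
case: (eqVneq g f) => [gf|_] /=; last first.
  by move: Up => /= /andP[-> ->]; rewrite inE negb_or anot az.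
subst g; have fp : f \notin map fst p.
  by have /= /andP[] := @walk_uniq_edges _ _ G1 a ((f, z) :: p) W0 U0.
have wsp : w \notin map snd (spath p).
  apply: contra fp => /subdivide_path_w; apply.
  by apply: contra wG1 => wp; apply: Az; rewrite inE wp orbT.
move: Up => /= /andP[zsp ->]; rewrite !inE !negb_or anot wsp zsp /= !andbT.
by rewrite (notw _ (A a (mem_head _ _))) az eq_sym (notw _ (Az _ (mem_head _ _))).
Qed.

Lemma is_path_subdivide_path u v p : is_path G1 u v p -> is_path G u v (spath p).
Proof.
have [[wG _ sub _] _] := Hs.
move=> /and4P[W U /allP A L]; apply/and4P; split.
- exact: walk_subdivide_path W.
- exact: uniq_subdivide_path W U A.
- apply/allP => z /[1!inE] /orP[/eqP ->|/subdivide_path_snd]; first exact/(subsetP sub)/A/mem_head.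
  by rewrite inE => /orP[/eqP ->|Hz] //; apply/(subsetP sub)/A; rewrite inE Hz orbT.
- by rewrite last_subdivide_path.
Qed.

Lemma walk_through_f a p : walk G1 a p -> f \in map fst p ->
  x \in a :: map snd p /\ y \in a :: map snd p.
Proof.
have [_ [_ _ _ _ Hf]] := Hs.
move=> W /mapP[[g c] Hgc /= fg]; subst g.
have [b Hb Jb] := mem_walk_joins W Hgc.
have Hc : c \in a :: map snd p by rewrite inE (map_f snd Hgc) orbT.
by case: (Hf _ _ Jb) => -[<- <-].
Qed.

Lemma is_path_off_w u v p : is_path G1 u v p -> w \notin u :: map snd p.
Proof.
have [[_ wG1 _ _] _] := Hs.
by case/and4P=> _ _ /allP A _; apply: contra wG1 => /A.
Qed.

Lemma subdivide_path_int_disjoint u v p q :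
  is_path G1 u v p -> is_path G1 u v q -> p != q -> int_disjoint u v p q ->
  int_disjoint u v (spath p) (spath q).
Proof.
have [[_ _ _ xy] [_ _ _ _ Hf]] := Hs.
move=> Pp Pq npq D z Hzp; apply/negP => Hzq.
have [wp wq] := (is_path_off_w Pp, is_path_off_w Pq).
have [Hp|zw] := inner_subdivide_path Hzp; have [Hq|zw'] := inner_subdivide_path Hzq.
- by have := D z Hp; rewrite Hq.
- by subst z; move: wp; rewrite (mem_subseq (filter_subseq _ _) Hp).
- by subst z; move: wq; rewrite (mem_subseq (filter_subseq _ _) Hq).
subst z; move: (Pp) (Pq) => /and4P[Wp Up _ /eqP Lp] /and4P[Wq Uq _ /eqP Lq].
have fp := inner_subdivide_path_w Hzp (contra (@mem_behead _ (u :: _) w) wp).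
have fq := inner_subdivide_path_w Hzq (contra (@mem_behead _ (u :: _) w) wq).
have [xp yp] := walk_through_f Wp fp; have [xq yq] := walk_through_f Wq fq.
have shared t : t \in u :: map snd p -> t \in u :: map snd q -> (t == u) || (t == v).
  move=> tp tq; apply/negPn/negP => /norP[tu tv].
  by have := D t (mem_inner tp tu tv); rewrite (mem_inner tq tu tv).
have Hends b c : joins G1 f b c -> (b = u /\ c = v) \/ (b = v /\ c = u).
  move/Hf; move: (shared x xp xq) (shared y yp yq) xy.
  by case/orP=> /eqP -> /orP[]/eqP ->; rewrite ?eqxx //; tauto.
have := walk_single_edge Wp Up Lp fp Hends; have := walk_single_edge Wq Uq Lq fq Hends.
by move=> Eq Ep; rewrite Ep Eq eqxx in npq.
Qed.

Lemma Qtriconnected_subdivision (Q : {set V}) : Qtriconnected G1 Q -> Qtriconnected G Q.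
Proof.
have [[_ _ sub _] [_ _ ef _ _]] := Hs.
move=> [HQ Ht]; split; first exact: subset_trans sub.
move=> u v Hu Hv uv.
apply: (triconnected_transfer (m := spath) _ _ (Ht u v Hu Hv uv)).
  by move=> p; apply: is_path_subdivide_path.
move=> p q Pp Pq npq D; split; last exact: subdivide_path_int_disjoint.
have wp := contra (@mem_behead _ (u :: _) w) (is_path_off_w Pp).
have wq := contra (@mem_behead _ (u :: _) w) (is_path_off_w Pq).
by apply: contraNneq npq => /(subdivide_path_inj ef wp wq) ->.
Qed.

End Subdivision.

Section Degree.
Variables (V E : finType) (H : mgraph V E) (w : V).

Let A := [set g in eset H | src H g == w].
Let B := [set g in eset H | tgt H g == w].

Lemma deg2_incident e f : deg H w = 2 -> e \in A :|: B -> f \in A :|: B -> e != f ->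
  A :|: B = [set e; f] /\ A :&: B = set0.
Proof.
move=> d2 eI fI ef.
have sub : [set e; f] \subset A :|: B by apply/subsetP => g /set2P[]->.
have sizeI : #|A :|: B| + #|A :&: B| = 2 by rewrite cardsUI.
have := subset_leq_card sub; rewrite cards2 ef => ge2.
have I0 : #|A :&: B| = 0.
  by apply/eqP; rewrite -(eqn_add2l #|A :|: B|) addn0 sizeI eqn_leq ge2 -{1}sizeI leq_addr.
split; last exact/cards0_eq.
by apply/esym/eqP; rewrite eqEcard sub cards2 ef -sizeI I0 addn0 /=.
Qed.

Lemma deg2_subdivision_vertex x e f : wf H -> w \in vset H -> deg H w = 2 ->
  x != w -> joins H e w x -> f \in eset H -> f != e -> (src H f == w) || (tgt H f == w) ->
  subdivision_vertex H w x (if src H f == w then tgt H f else src H f) e f.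
Proof.
move=> W wH d2 xw Je fH fe fw; set y := (if _ then _ else _).
have Jf : joins H f w y.
  apply: (joins_of_endpoints fH); rewrite /y.
  case: (eqVneq (src H f) w) fw => s fw; [left | right]; split => //.
  exact/eqP.
have inc g b : joins H g w b -> g \in A :|: B.
  by case/andP=> gH /orP[]/andP[s _]; rewrite !inE gH s ?orbT.
have [I2 I0] := deg2_incident d2 (inc _ _ Je) (inc _ _ Jf) (contra_neq esym fe).
have yw : y != w.
  apply/eqP => yw; have : f \in A :&: B; last by rewrite I0 inE.
  by rewrite !inE fH; case: (joins_endpoints Jf) => -[-> ->]; rewrite yw eqxx.
split; first by split; rewrite // ?(wf_joins W Je).2 ?(wf_joins W Jf).2.
split; rewrite // 1?eq_sym //.
move=> g gH ge gf; have : g \notin A :|: B by rewrite I2 !inE negb_or ge gf.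
by rewrite !inE gH negb_or.
Qed.

End Degree.

Lemma minimal_Qtriconnected_other (V E : finType) (H : mgraph V E) (Q : {set V}) e z :
  minimal_Qtriconnected H Q -> e \in eset H -> exists2 v, v \in Q & v != z.
Proof.
move=> [[HQ _] Hmin_e _] eH.
case: (boolP [exists v in Q, v != z]) => [/existsP[v /andP[]]|/existsPn Qz]; first by exists v.
exfalso; apply: (Hmin_e e eH); apply: Qtriconnected_trivial => // u v Hu Hv.
by move: (Qz u) (Qz v); rewrite Hu Hv /= !negbK => /eqP -> /eqP ->.
Qed.

Section ContractionStep.
Variables (V E : finType) (H : mgraph V E) (w x y : V) (e f : E) (Q : {set V}).
Hypothesis Hw : subdivision_vertex H w x y e f.
Hypothesis Hmin : minimal_Qtriconnected H Q.

Let H' := contraction H w x e f.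

Lemma subdivision_vertex_notin_Q : w \notin Q.
Proof.
have [_ [Je _ _ _]] := Hw; have [[_ Htri] _ _] := Hmin.
have [v Hv vw] := minimal_Qtriconnected_other w Hmin (proj1 (andP Je)).
apply/negP => wQ; apply: (not_triconnected_at_w Hw vw).
by apply: Htri; rewrite // eq_sym.
Qed.

Lemma subdivision_vertex_ends_neq : x != y.
Proof.
have [[wH _ _ _ _] _] := Hw; have [HQ _ Hmin_v] := Hmin.
apply/eqP => xy; apply: (Hmin_v w wH).
exact: (Qtriconnected_del_w Hw xy subdivision_vertex_notin_Q HQ).
Qed.

Lemma contraction_joins_other g b c : g != f -> joins H' g b c -> joins H g b c /\ g != e.
Proof.
move=> gf J; case: (eqVneq g e) => [ge|ge]; first by rewrite ge contraction_joins_e in J.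
by rewrite -(contraction_joins H w x b c ge gf).
Qed.

Lemma contraction_endpoints_f :
  (src H' f = x /\ tgt H' f = y) \/ (src H' f = y /\ tgt H' f = x).
Proof.
have [_ [_ _ ef _]] := Hw.
have J : joins H' f x y by rewrite (contraction_joins_f Hw) !eqxx.
by case: (joins_endpoints J) => -[-> ->]; [left | right].
Qed.

Lemma contraction_joins_f_ends b c :
  joins H' f b c -> (b = x /\ c = y) \/ (b = y /\ c = x).
Proof. by rewrite (contraction_joins_f Hw) => /orP[]/andP[/eqP -> /eqP ->]; auto. Qed.

Lemma wf_contraction : wf H -> wf H'.
Proof.
have [[_ xH yH xw yw] [_ _ _ Hother]] := Hw.
move=> W g; rewrite [eset _]/= in_setD1 => /andP[ge gH].
case: (eqVneq g f) => [->|gf].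
  by case: contraction_endpoints_f => -[-> ->]; rewrite /= !in_setD1 xw yw xH yH.
have [-> ->] := contraction_endpoints H w x e gf.
have /andP[s t] := Hother g gH ge gf; have [sH tH] := W g gH.
by rewrite /= !in_setD1 s t sH tH.
Qed.

Lemma contraction_del_edge g : g \in eset H' -> ~ Qtriconnected (del_edge H' g) Q.
Proof.
have [[wH _ _ _ _] [Je Jf ef _]] := Hw; have [_ Hmin_e _] := Hmin.
have xy := subdivision_vertex_ends_neq.
rewrite [eset _]/= in_setD1 => /andP[ge gH] Qg; apply: (Hmin_e g gH).
case: (eqVneq g f) => [gf|gf].
  subst g; apply: (Qtriconnected_mono _ _ Qg); last exact: subD1set.
  move=> g' b c; rewrite !joins_del_edge => /andP[g'f J]; rewrite g'f.
  exact: (contraction_joins_other g'f J).1.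
apply: (Qtriconnected_subdivision (w := w) (x := x) (y := y) (e := e) (f := f)) Qg.
split; split => //.
- by rewrite /= in_setD1 eqxx.
- exact: subD1set.
- by rewrite joins_del_edge Je andbT eq_sym.
- by rewrite joins_del_edge Jf andbT eq_sym.
- move=> g' b c g'f; rewrite !joins_del_edge => /andP[-> J] /=.
  exact: (contraction_joins_other g'f J).1.
- by move=> b c; rewrite joins_del_edge => /andP[_ /contraction_joins_f_ends].
Qed.

Lemma contraction_del_vertex z : z \in vset H' -> ~ Qtriconnected (del_vertex H' z) Q.
Proof.
have [[wH _ _ _ _] [Je Jf ef _]] := Hw; have [_ _ Hmin_v] := Hmin.
have xy := subdivision_vertex_ends_neq.
have sub : (vset H :\ w) :\ z \subset vset H :\ z.
  by apply/subsetP => v; rewrite !in_setD1 => /andP[-> /andP[_ ->]].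
have joins_other g b c : g != f -> joins (del_vertex H' z) g b c -> joins (del_vertex H z) g b c.
  move=> gf; rewrite !joins_del_vertex => /and3P[J s t].
  have [s' t'] := contraction_endpoints H w x e gf; rewrite s' t' in s t.
  by rewrite (contraction_joins_other gf J).1 s t.
rewrite [vset _]/= in_setD1 => /andP[zw zH] Qz; apply: (Hmin_v z zH).
case: (boolP ((z == x) || (z == y))) => zxy.
  apply: (Qtriconnected_mono _ _ Qz); last exact: sub.
  move=> g b c; case: (eqVneq g f) => [->|gf]; last exact: joins_other.
  rewrite joins_del_vertex => /and3P[_ s t]; move: s t.
  by case: contraction_endpoints_f => -[-> ->]; case/orP: zxy => /eqP ->; rewrite eqxx.
move: zxy; rewrite negb_or => /andP[zx zy].
apply: (Qtriconnected_subdivision (w := w) (x := x) (y := y) (e := e) (f := f)) Qz.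
split; split => //.
- by rewrite in_setD1 eq_sym zw.
- by rewrite /= !in_setD1 eqxx andbF.
- by rewrite joins_del_vertex Je; case: (joins_endpoints Je) => -[-> ->];
    rewrite ![_ == z]eq_sym zw zx.
- by rewrite joins_del_vertex Jf; case: (joins_endpoints Jf) => -[-> ->];
    rewrite ![_ == z]eq_sym zw zy.
- by move=> b c; rewrite joins_del_vertex => /and3P[/contraction_joins_f_ends].
Qed.

Lemma minimal_contraction : minimal_Qtriconnected H' Q.
Proof.
have [HQ _ _] := Hmin.
split; first exact: (Qtriconnected_contraction Hw subdivision_vertex_notin_Q HQ).
- exact: contraction_del_edge.
- exact: contraction_del_vertex.
Qed.

End ContractionStep.

Lemma contract_step_minimal (V E : finType) (H H1 : mgraph V E) (Q : {set V}) :
  wf H -> minimal_Qtriconnected H Q -> contract_step H H1 ->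
  wf H1 /\ minimal_Qtriconnected H1 Q.
Proof.
move=> W Hmin [w [x [e [f [[wH dw xw Je] [[fH fe fw] ->]]]]]].
have Hw := deg2_subdivision_vertex W wH dw xw Je fH fe fw.
by split; [exact: wf_contraction Hw W | exact: minimal_contraction Hw Hmin].
Qed.

Lemma contracts_minimal (V E : finType) (H H' : mgraph V E) (Q : {set V}) :
  contracts H H' -> wf H -> minimal_Qtriconnected H Q -> minimal_Qtriconnected H' Q.
Proof.
elim=> [//|G G1 G2 step _ IH] W Hmin.
by have [W1 Hmin1] := contract_step_minimal W Hmin step; exact: IH.
Qed.

Theorem lemma4 (V E : finType) (H : mgraph V E) (Q : {set V}) :
  wf H -> simple H -> minimal_Qtriconnected H Q ->
  forall H' : mgraph V E, contracted_version H H' ->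
  minimal_Qtriconnected H' Q.
Proof.
by move=> W _ Hmin H' [C _]; exact: contracts_minimal C W Hmin.
Qed.
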